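(* Let $G$ be a group. If the set $\{x\in G:x^3=1\}$ is $7$-large in $G$, then $G$ is $2$-Engel, i.e. $[x,y,y]=1$ for all $x,y\in G$.
   Context: $[x,y]=x^{-1}y^{-1}xy$ and $[x,y,z]=[[x,y],z]$. A subset $X\subseteq G$ is $k$-large in $G$ if the intersection of any $k$ left translates $g_1X\cap\dots\cap g_kX$ ($g_i\in G$) is non-empty. *)

From Stdlib Require Import Arith.

Record is_group (G : Type) (mul : G -> G -> G) (one : G) (inv : G -> G) : Prop := {
  grp_assoc : forall x y z, mul x (mul y z) = mul (mul x y) z;
  grp_mul1l : forall x, mul one x = x;
  grp_mul1r : forall x, mul x one = x;
  grp_mulVl : forall x, mul (inv x) x = one;
  grp_mulVr : forall x, mul x (inv x) = one
}.

Definition gcomm {G : Type} (mul : G -> G -> G) (inv : G -> G) (x y : G) : G :=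
  mul (mul (mul (inv x) (inv y)) x) y.

Definition gcomm3 {G : Type} (mul : G -> G -> G) (inv : G -> G) (x y z : G) : G :=
  gcomm mul inv (gcomm mul inv x y) z.

Definition k_large {G : Type} (mul : G -> G -> G) (X : G -> Prop) (k : nat) : Prop :=
  forall g : nat -> G, exists z : G,
    forall i, i < k -> exists x, X x /\ z = mul (g i) x.

Definition two_Engel {G : Type} (mul : G -> G -> G) (one : G) (inv : G -> G) : Prop :=
  forall x y : G, gcomm3 mul inv x y y = one.

(* If u^3 = 1 then (a u)^3 = a a^(u^-1) a^u, and conjugation by u permutes
   the three factors cyclically.  Applied to p and p^-1 with u = q, this shows
   that p commutes with p^q when q, pq and p^-1 q are cubic roots of 1.  Applied
   to commuting a, b with (au)^3 = (bu)^3 = (abu)^3 = 1, it shows that b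
   commutes with a^u.  Since the set of cubic roots of 1 is 7-large, there is a
   z such that wz is a cubic root of 1 for each of the seven words
   w = 1, y, y^-1, x, yx, xy, yxy; the first fact then gives [y, y^z] = 1, the
   second (with a = y, b = y^z, u = xz) gives [y^z, y^(xz)] = 1, that is
   [y, y^x] = 1, which is equivalent to [x, y, y] = 1. *)

From Stdlib Require Import List Lia.
Import ListNotations.

Set Implicit Arguments.

Declare Scope group_scope.

Section GroupTheory.

Variables (G : Type) (mul : G -> G -> G) (one : G) (inv : G -> G).
Hypothesis HG : is_group G mul one inv.

Local Notation "x * y" := (mul x y) : group_scope.
Local Notation "x ^-1" := (inv x)
  (at level 3, left associativity, format "x ^-1") : group_scope.
Local Open Scope group_scope.

Definition conjg (x g : G) : G := g^-1 * x * g.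
Local Notation "x ^ g" := (conjg x g) : group_scope.

Definition commute (x y : G) : Prop := x * y = y * x.

Definition cube (x : G) : G := x * (x * x).

Lemma mulgA x y z : x * (y * z) = x * y * z.
Proof. exact (grp_assoc _ _ _ _ HG x y z). Qed.

Lemma mul1g x : one * x = x.
Proof. exact (grp_mul1l _ _ _ _ HG x). Qed.

Lemma mulg1 x : x * one = x.
Proof. exact (grp_mul1r _ _ _ _ HG x). Qed.

Lemma mulVg x : x^-1 * x = one.
Proof. exact (grp_mulVl _ _ _ _ HG x). Qed.

Lemma mulgV x : x * x^-1 = one.
Proof. exact (grp_mulVr _ _ _ _ HG x). Qed.

Lemma mulKg x y : x^-1 * (x * y) = y.
Proof. now rewrite mulgA, mulVg, mul1g. Qed.

Lemma mulKVg x y : x * (x^-1 * y) = y.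
Proof. now rewrite mulgA, mulgV, mul1g. Qed.

Lemma mulgK x y : x * y * y^-1 = x.
Proof. now rewrite <- mulgA, mulgV, mulg1. Qed.

Lemma mulgKV x y : x * y^-1 * y = x.
Proof. now rewrite <- mulgA, mulVg, mulg1. Qed.

Lemma mulgI x y z : x * y = x * z -> y = z.
Proof. intros E. now rewrite <- (mulKg x y), E, mulKg. Qed.

Lemma mulIg x y z : y * x = z * x -> y = z.
Proof. intros E. now rewrite <- (mulgK y x), E, mulgK. Qed.

Lemma mulg1_eq x y : x * y = one -> x^-1 = y.
Proof. intros E. now rewrite <- (mulKg x y), E, mulg1. Qed.

Lemma invgK x : x^-1^-1 = x.
Proof. apply mulg1_eq, mulVg. Qed.

Lemma invg1 : one^-1 = one.
Proof. apply mulg1_eq, mulg1. Qed.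

Lemma invMg x y : (x * y)^-1 = y^-1 * x^-1.
Proof. apply mulg1_eq. now rewrite mulgA, mulgK, mulgV. Qed.

(* Left-normalises both sides and cancels adjacent inverse letters, which
   proves any identity valid in the free group. *)
Ltac group_eq :=
  unfold conjg;
  repeat progress rewrite ?invMg, ?invgK, ?invg1, ?mulgA, ?mulgK, ?mulgKV,
    ?mulVg, ?mulgV, ?mul1g, ?mulg1;
  reflexivity.

Lemma conj1g g : one ^ g = one.
Proof. group_eq. Qed.

Lemma conjMg x y g : (x * y) ^ g = x ^ g * y ^ g.
Proof. group_eq. Qed.

Lemma conjVg x g : x^-1 ^ g = (x ^ g)^-1.
Proof. group_eq. Qed.

Lemma conjgM x g h : x ^ (g * h) = (x ^ g) ^ h.
Proof. group_eq. Qed.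

Lemma conjgK x g : (x ^ g) ^ g^-1 = x.
Proof. group_eq. Qed.

Lemma conjgKV x g : (x ^ g^-1) ^ g = x.
Proof. group_eq. Qed.

Lemma commute_sym x y : commute x y -> commute y x.
Proof. unfold commute. now intros ->. Qed.

Lemma commute_refl x : commute x x.
Proof. reflexivity. Qed.

Lemma commuteV x y : commute x y -> commute x y^-1.
Proof.
  unfold commute. intros E. apply (mulgI (x := y)).
  now rewrite mulKVg, mulgA, <- E, mulgK.
Qed.

Lemma commuteM x y z : commute x y -> commute x z -> commute x (y * z).
Proof.
  unfold commute. intros Ey Ez.
  now rewrite mulgA, Ey, <- mulgA, Ez, mulgA.
Qed.

Lemma commute_conj x y g : commute x y -> commute (x ^ g) (y ^ g).
Proof. unfold commute. intros E. now rewrite <- !conjMg, E. Qed.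

Lemma commute_of_conj_fix x y : x * y * x^-1 = y -> commute x y.
Proof. unfold commute. intros E. rewrite <- E at 2. now rewrite mulgKV. Qed.

Lemma gcomm_eq1 x y : commute x y -> gcomm mul inv x y = one.
Proof.
  unfold gcomm. intros E.
  now rewrite <- mulgA, E, mulgA, mulgKV, mulVg.
Qed.

Lemma cube_conjg x g : cube x = one -> cube (x ^ g) = one.
Proof. unfold cube. intros E. now rewrite <- !conjMg, E, conj1g. Qed.

Lemma invg_sq_order3 u : cube u = one -> u^-1 * u^-1 = u.
Proof. intros E. rewrite <- invMg, <- (mulg1_eq E). apply invgK. Qed.

Lemma sq_order3 u : cube u = one -> u * u = u^-1.
Proof. intros E. symmetry. exact (mulg1_eq E). Qed.

Lemma cube_mul_order3 a u :
  cube u = one -> cube (a * u) = a * a ^ u^-1 * a ^ u.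
Proof.
  intros Hu. unfold cube, conjg. rewrite invgK, !mulgA.
  now rewrite <- (mulgA (a * u * a) u^-1 u^-1), (invg_sq_order3 Hu).
Qed.

Lemma commute_self_conjg_of_cubes p q :
  cube q = one -> cube (p * q) = one -> cube (p^-1 * q) = one ->
  commute p (p ^ q).
Proof.
  intros Hq Hpq Hpq'.
  rewrite (cube_mul_order3 p Hq) in Hpq.
  rewrite (cube_mul_order3 p^-1 Hq), !conjVg in Hpq'.
  apply mulg1_eq in Hpq, Hpq'. rewrite invMg, !invgK in Hpq'.
  assert (Hps : commute p (p ^ q^-1)).
  { unfold commute. now rewrite Hpq', <- Hpq, invgK. }
  apply commute_sym in Hps. apply (commute_conj q) in Hps.
  now rewrite conjgKV in Hps.
Qed.

Lemma commute_conjg_of_cubes a b u :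
  commute a b -> cube u = one ->
  cube (a * u) = one -> cube (b * u) = one -> cube (a * b * u) = one ->
  commute b (a ^ u).
Proof.
  intros Hab Hu Ha Hb Habu.
  rewrite (cube_mul_order3 a Hu) in Ha. rewrite (cube_mul_order3 b Hu) in Hb.
  rewrite (cube_mul_order3 (a * b) Hu) in Habu. rewrite !conjMg in Habu.
  apply mulg1_eq in Ha.
  (* a^u = (a a^(u^-1))^-1 and b^u = (b b^(u^-1))^-1 turn the cube of abu
     into the statement that a a^(u^-1) commutes with b^(u^-1). *)
  assert (HX : commute (a * a ^ u^-1) (b ^ u^-1)).
  { apply commute_of_conj_fix, (mulgI (x := b)), (mulIg (x := b ^ u)).
    rewrite mulgA, Hb, <- Habu, Hab, <- Ha. group_eq. }
  assert (Hbsa : commute b (a ^ u^-1)).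
  { apply commute_sym, commuteV, (commute_conj u) in HX.
    now rewrite conjgKV, Ha, <- conjgM, (sq_order3 Hu) in HX. }
  rewrite <- Ha. apply commuteV, commuteM; [apply commute_sym, Hab | exact Hbsa].
Qed.

Lemma commute_self_conjg_of_engel_cubes x y z :
  cube z = one -> cube (y * z) = one -> cube (y^-1 * z) = one ->
  cube (x * z) = one -> cube (y * x * z) = one -> cube (x * y * z) = one ->
  cube (y * x * y * z) = one ->
  commute y (y ^ x).
Proof.
  intros Hz Hyz Hy'z Hxz Hyxz Hxyz Hyxyz.
  assert (Hyyz : commute y (y ^ z))
    by exact (commute_self_conjg_of_cubes Hz Hyz Hy'z).
  assert (Hyzyxz : commute (y ^ z) (y ^ (x * z))).
  { apply commute_conjg_of_cubes; [exact Hyyz | exact Hxz | | |].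
    - now rewrite mulgA.
    - replace (y ^ z * (x * z)) with ((x * y * z) ^ (x * z)) by group_eq.
      now apply cube_conjg.
    - rewrite Hyyz.
      replace (y ^ z * y * (x * z)) with ((y * x * y * z) ^ (y * x * z))
        by group_eq.
      now apply cube_conjg. }
  apply (commute_conj z^-1) in Hyzyxz.
  now rewrite conjgM, !conjgK in Hyzyxz.
Qed.

Lemma gcomm3_eq1 x y : commute y (y ^ x) -> gcomm3 mul inv x y y = one.
Proof.
  intros E. unfold gcomm3. apply gcomm_eq1, commute_sym.
  replace (gcomm mul inv x y) with ((y ^ x)^-1 * y) by (unfold gcomm; group_eq).
  exact (commuteM (commuteV E) (commute_refl y)).
Qed.

Lemma k_large_mul X k :
  k_large mul X k -> forall w : nat -> G, exists z, forall i, i < k -> X (w i * z).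
Proof.
  intros Hl w. destruct (Hl (fun i => (w i)^-1)) as [z Hz].
  exists z. intros i Hi. destruct (Hz i Hi) as [v [Hv ->]].
  now rewrite mulKVg.
Qed.

Definition engel_words (x y : G) : list G :=
  [one; y; y^-1; x; y * x; x * y; y * x * y].

Lemma gcomm3_eq1_of_engel_words x y z :
  (forall i, i < 7 -> cube (nth i (engel_words x y) one * z) = one) ->
  gcomm3 mul inv x y y = one.
Proof.
  intros Hz.
  apply gcomm3_eq1, (commute_self_conjg_of_engel_cubes (z := z));
    [rewrite <- (mul1g z); apply (Hz 0) | apply (Hz 1) | apply (Hz 2)
    | apply (Hz 3) | apply (Hz 4) | apply (Hz 5) | apply (Hz 6)]; lia.
Qed.

End GroupTheory.

Theorem theorem4p3 (G : Type) (mul : G -> G -> G) (one : G) (inv : G -> G)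
  (HG : is_group G mul one inv)
  (Hlarge : k_large mul (fun x => mul x (mul x x) = one) 7) :
  two_Engel mul one inv.
Proof.
  intros x y.
  destruct (k_large_mul HG Hlarge (fun i => nth i (engel_words mul one inv x y) one))
    as [z Hz].
  exact (gcomm3_eq1_of_engel_words HG x y z Hz).
Qed.
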